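(* Let $\tilde{\mathcal{A}}(R,\boldsymbol{\sigma},\boldsymbol{t})$ be a twisted generalized Weyl construction with $t_1,\dots,t_n$ regular in $R$ and satisfying the consistency equations, and let $\mathcal{A}(R,\boldsymbol{\sigma},\boldsymbol{t})$ be the corresponding twisted generalized Weyl algebra. If $\mathcal{B}$ is a $\Bbbk$-algebra and $\tilde{\varphi}:\tilde{\mathcal{A}}(R,\boldsymbol{\sigma},\boldsymbol{t})\to\mathcal{B}$ is a $\Bbbk$-algebra homomorphism such that $\tilde\varphi(r)$ is regular (not a zero-divisor) in $\mathcal{B}$ for every regular element $r$ of $R$, then $\tilde\varphi$ induces a $\Bbbk$-algebra homomorphism $\varphi:\mathcal{A}(R,\boldsymbol{\sigma},\boldsymbol{t})\to\mathcal{B}$.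
   Context: Let $\Bbbk$ be a field, $R$ a unital associative $\Bbbk$-algebra, $\sigma_1^{1/2},\dots,\sigma_n^{1/2}$ pairwise commuting automorphisms of $R$ ($\sigma_i=(\sigma_i^{1/2})^2$), $t_1,\dots,t_n\in Z(R)$. The TGWC $\tilde{\mathcal{A}}(R,\boldsymbol{\sigma},\boldsymbol{t})$ is obtained from $R$ by adjoining $X_1^\pm,\dots,X_n^\pm$ with relations $X_i^\pm r=\sigma_i^{\pm1}(r)X_i^\pm$, $X_i^\pm X_i^\mp=\sigma_i^{\pm1/2}(t_i)$, $[X_i^\pm,X_j^\mp]=0$ ($i\ne j$); it is $\mathbb{Z}^n$-graded by $\deg r=0$, $\deg X_i^\pm=\pm\mathbf{e}_i$. The TGWA $\mathcal{A}(R,\boldsymbol{\sigma},\boldsymbol{t})$ is $\tilde{\mathcal{A}}/\mathcal{I}$, where $\mathcal{I}$ is the sum of all graded ideals of $\tilde{\mathcal{A}}$ intersecting the degree-zero part trivially. Consistency equations: $\sigma_j^{1/2}(t_i)\sigma_i^{1/2}(t_j)=\sigma_j^{-1/2}(t_i)\sigma_i^{-1/2}(t_j)$ for $i\ne j$, and $\sigma_i^{1/2}\sigma_j^{1/2}(t_k)\sigma_i^{-1/2}\sigma_j^{-1/2}(t_k)=\sigma_i^{1/2}\sigma_j^{-1/2}(t_k)\sigma_i^{-1/2}\sigma_j^{1/2}(t_k)$ for pairwise distinct $i,j,k$; under these, $R$ is identified with the degree-zero parts of $\tilde{\mathcal{A}}$ and $\mathcal{A}$. *)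

From HB Require Import structures.
From mathcomp Require Import all_boot all_order all_algebra.
Set Implicit Arguments. Unset Strict Implicit. Unset Printing Implicit Defensive.
Import Order.TTheory GRing.Theory Num.Theory.
Local Open Scope ring_scope.

(* Twisted generalized Weyl constructions/algebras.
   sh i  = sigma_i^{1/2},  shi i = sigma_i^{-1/2}  (its inverse). *)

Section TGW.
Variables (k : fieldType) (n : nat) (R : algType k).
Variables (sh shi : 'I_n -> R -> R) (t : 'I_n -> R).

Definition sigma_p (i : 'I_n) (r : R) : R := sh i (sh i r).
Definition sigma_m (i : 'I_n) (r : R) : R := shi i (shi i r).

Definition regular (C : pzRingType) (c : C) : Prop :=
  (forall x : C, c * x = 0 -> x = 0) /\ (forall x : C, x * c = 0 -> x = 0).

(* the defining relations of the TGWC, for an image psi of R and images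
   Yp i, Ym i of X_i^+, X_i^- in an algebra C *)
Definition TGWC_rel (C : algType k) (psi : R -> C) (Yp Ym : 'I_n -> C) : Prop :=
  [/\ forall i r, Yp i * psi r = psi (sigma_p i r) * Yp i,
      forall i r, Ym i * psi r = psi (sigma_m i r) * Ym i,
      forall i, Yp i * Ym i = psi (sh i (t i)),
      forall i, Ym i * Yp i = psi (shi i (t i)) &
      forall i j, i != j -> Yp i * Ym j = Ym j * Yp i].

Definition consistency : Prop :=
  (forall i j, i != j ->
     sh j (t i) * sh i (t j) = shi j (t i) * shi i (t j)) /\
  (forall i j l, i != j -> j != l -> i != l ->
     sh i (sh j (t l)) * shi i (shi j (t l)) =
     sh i (shi j (t l)) * shi i (sh j (t l))).

(* (A, iota, Xp, Xm) is the TGWC  A~(R, sigma, t): the k-algebra generated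
   by R and X_i^{+-} subject to the relations, given by its universal property *)
Definition is_TGWC (A : algType k) (iota : {lrmorphism R -> A})
    (Xp Xm : 'I_n -> A) : Prop :=
  TGWC_rel iota Xp Xm /\
  forall (B : algType k) (psi : {lrmorphism R -> B}) (Yp Ym : 'I_n -> B),
    TGWC_rel psi Yp Ym ->
    exists f : {lrmorphism A -> B},
      ((forall r, f (iota r) = psi r) /\
       (forall i, f (Xp i) = Yp i) /\ (forall i, f (Xm i) = Ym i)) /\
      (forall g : {lrmorphism A -> B},
         (forall r, g (iota r) = psi r) ->
         (forall i, g (Xp i) = Yp i) -> (forall i, g (Xm i) = Ym i) ->
         forall a, g a = f a).

(* words in the letters X_i^+ (true) and X_i^- (false) *)
Definition word := seq ('I_n * bool).

Definition word_deg (w : word) : {ffun 'I_n -> int} :=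
  [ffun j => \sum_(x <- w) (if x.1 == j then (if x.2 then 1 else -1) else 0)].

Definition deg0 : {ffun 'I_n -> int} := [ffun => 0].

Section Grading.
Variables (A : algType k) (iota : R -> A) (Xp Xm : 'I_n -> A).

Definition word_val (w : word) : A :=
  \prod_(x <- w) (if x.2 then Xp x.1 else Xm x.1).

Definition in_deg (g : {ffun 'I_n -> int}) (a : A) : Prop :=
  exists s : seq (R * word),
    (forall p, p \in s -> word_deg p.2 = g) /\
    a = \sum_(p <- s) iota p.1 * word_val p.2.

Definition two_sided_ideal (I : A -> Prop) : Prop :=
  [/\ I 0, forall a b, I a -> I b -> I (a + b), forall a, I a -> I (- a),
      forall a b, I b -> I (a * b) & forall a b, I a -> I (a * b)].

Definition graded_ideal (I : A -> Prop) : Prop :=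
  two_sided_ideal I /\
  forall a, I a -> exists s : seq ({ffun 'I_n -> int} * A),
    (forall p, p \in s -> I p.2 /\ in_deg p.1 p.2) /\ a = \sum_(p <- s) p.2.

Definition admissible_ideal (I : A -> Prop) : Prop :=
  graded_ideal I /\ forall a, I a -> in_deg deg0 a -> a = 0.

(* the ideal  I = sum of all such ideals; TGWA = A / I *)
Definition TGWA_ideal (a : A) : Prop :=
  exists s : seq A,
    (forall b, b \in s -> exists I, admissible_ideal I /\ I b) /\
    a = \sum_(b <- s) b.

End Grading.
End TGW.

From HB Require Import structures.
From mathcomp Require Import all_boot all_order all_algebra.
Import GRing.Theory.
Local Open Scope ring_scope.

(* A homogeneous element c of degree g of an admissible ideal I is a sum of
   terms iota r * X_w with deg w = g.  For u the inverse word of such a w,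
   X_u c lies in I and has degree 0, hence vanishes.  The X_i^(+-) twist R by
   automorphisms and X_i^(-+) X_i^(+-) = iota (sigma_i^(-+1/2) t_i), so for u'
   the inverse word of u the product X_u' X_u is iota r with r regular.  Thus
   iota r * c = 0, and phi c = 0 because phi (iota r) is regular. *)

Lemma regularM {C : pzRingType} {a b : C} :
  regular a -> regular b -> regular (a * b).
Proof.
move=> [a1 a2] [b1 b2]; split=> x.
- by rewrite -mulrA => /a1 /b1.
- by rewrite mulrA => /b2 /a2.
Qed.

Lemma regular1 (C : pzRingType) : regular (1 : C).
Proof. by split=> x; rewrite ?mul1r ?mulr1. Qed.

Lemma regular_rmorph_bij {C D : pzRingType} {f : {rmorphism C -> D}}
    {g : {rmorphism D -> C}} :
  cancel f g -> cancel g f -> forall c, regular c -> regular (f c).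
Proof.
move=> fK gK c [c1 c2]; split=> x fcx0; rewrite -[x]gK.
- suff -> : g x = 0 by rewrite rmorph0.
  by apply: c1; rewrite -[c in c * _]fK -rmorphM fcx0 rmorph0.
- suff -> : g x = 0 by rewrite rmorph0.
  by apply: c2; rewrite -[c in _ * c]fK -rmorphM fcx0 rmorph0.
Qed.

Section Words.
Local Set Implicit Arguments.
Local Unset Strict Implicit.

Variables (k : fieldType) (n : nat) (R : algType k).
Variables (sh shi : 'I_n -> {lrmorphism R -> R}) (t : 'I_n -> R).
Hypotheses (sh_shi : forall i, cancel (sh i) (shi i))
           (shi_sh : forall i, cancel (shi i) (sh i)).
Hypothesis t_reg : forall i, regular (t i).
Variables (A : algType k) (iota : {lrmorphism R -> A}) (Xp Xm : 'I_n -> A).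
Hypothesis rel : TGWC_rel sh shi t iota Xp Xm.

Definition letter_val (x : 'I_n * bool) : A := if x.2 then Xp x.1 else Xm x.1.

Definition letter_aut (x : 'I_n * bool) : R -> R :=
  if x.2 then sigma_p sh x.1 else sigma_m shi x.1.

Definition word_aut (w : word n) (r : R) : R := foldr letter_aut r w.

Definition letter_inv (x : 'I_n * bool) : 'I_n * bool := (x.1, ~~ x.2).

Definition word_inv (w : word n) : word n := rev (map letter_inv w).

Lemma word_val_nil : word_val Xp Xm [::] = 1.
Proof. exact: big_nil. Qed.

Lemma word_val_cons x w :
  word_val Xp Xm (x :: w) = letter_val x * word_val Xp Xm w.
Proof. exact: big_cons. Qed.

Lemma word_val_rcons x w :
  word_val Xp Xm (rcons w x) = word_val Xp Xm w * letter_val x.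
Proof. exact: big_rcons. Qed.

Lemma word_val_cat u w :
  word_val Xp Xm (u ++ w) = word_val Xp Xm u * word_val Xp Xm w.
Proof. exact: big_cat. Qed.

Lemma word_deg_cat (u w : word n) : word_deg (u ++ w) = word_deg u + word_deg w.
Proof. by apply/ffunP=> j; rewrite !ffunE big_cat. Qed.

Lemma word_deg_inv (w : word n) : word_deg (word_inv w) = - word_deg w.
Proof.
apply/ffunP=> j; rewrite !ffunE big_rev big_map -sumrN.
by apply: eq_bigr => -[i []] _ /=; case: (i == j); rewrite ?oppr0.
Qed.

Lemma letter_val_commute x r :
  letter_val x * iota r = iota (letter_aut x r) * letter_val x.
Proof.
have [relp relm _ _ _] := rel.
by rewrite /letter_val /letter_aut; case: x.2; [apply: relp | apply: relm].
Qed.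

Lemma word_val_commute w r :
  word_val Xp Xm w * iota r = iota (word_aut w r) * word_val Xp Xm w.
Proof.
elim: w r => [|x w IHw] r; first by rewrite word_val_nil mul1r mulr1.
by rewrite word_val_cons -mulrA IHw mulrA letter_val_commute -mulrA.
Qed.

Lemma regular_letter_aut x r : regular r -> regular (letter_aut x r).
Proof.
rewrite /letter_aut /sigma_p /sigma_m; case: x.2 => reg_r.
- by do 2 apply: (regular_rmorph_bij (sh_shi _) (shi_sh _)).
- by do 2 apply: (regular_rmorph_bij (shi_sh _) (sh_shi _)).
Qed.

Lemma letter_inv_mul x :
  exists2 s, regular s & letter_val (letter_inv x) * letter_val x = iota s.
Proof.
have [_ _ relpm relmp _] := rel; rewrite /letter_val /=; case: x.2 => /=.
- exists (shi x.1 (t x.1)); last exact: relmp.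
  exact: (regular_rmorph_bij (shi_sh _) (sh_shi _)).
- exists (sh x.1 (t x.1)); last exact: relpm.
  exact: (regular_rmorph_bij (sh_shi _) (shi_sh _)).
Qed.

Lemma word_inv_conj w r : regular r ->
  exists2 r', regular r' &
    word_val Xp Xm (word_inv w) * iota r * word_val Xp Xm w = iota r'.
Proof.
elim: w r => [|x w IHw] r reg_r.
  by exists r; rewrite // word_val_nil mul1r mulr1.
have [s reg_s xinv_x] := letter_inv_mul x.
have [r' reg_r' conj_w] :=
  IHw _ (regularM (regular_letter_aut (letter_inv x) reg_r) reg_s).
exists r' => //; rewrite -conj_w.
rewrite /word_inv map_cons rev_cons word_val_rcons word_val_cons -/(word_inv w).
rewrite -(mulrA _ (letter_val _)) letter_val_commute !mulrA.
by rewrite -(mulrA _ (letter_val (letter_inv x))) xinv_x rmorphM !mulrA.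
Qed.

Lemma in_deg_word_valM g c w : in_deg iota Xp Xm g c ->
  in_deg iota Xp Xm (word_deg w + g) (word_val Xp Xm w * c).
Proof.
move=> [s [deg_s ->]].
exists [seq (word_aut w p.1, w ++ p.2) | p <- s]; split.
  by move=> _ /mapP[p p_s ->]; rewrite word_deg_cat deg_s.
rewrite big_map mulr_sumr; apply: eq_bigr => p _.
by rewrite word_val_cat mulrA word_val_commute mulrA.
Qed.

Lemma in_deg_word g c : in_deg iota Xp Xm g c -> c != 0 ->
  exists w : word n, word_deg w = g.
Proof.
move=> [[|p s] [deg_s ->]]; first by rewrite big_nil eqxx.
by exists p.2; rewrite deg_s ?mem_head.
Qed.

Variables (B : algType k) (phi : {lrmorphism A -> B}).
Hypothesis phi_reg : forall r : R, regular r -> regular (phi (iota r)).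

Lemma phi_homogeneous_admissible_eq0 I g c :
  admissible_ideal iota Xp Xm I -> I c -> in_deg iota Xp Xm g c -> phi c = 0.
Proof.
move=> [[[_ _ _ I_mull _] _] I_deg0] Ic c_g.
have [->|c_neq0] := eqVneq c 0; first by rewrite rmorph0.
have [w deg_w] := in_deg_word c_g c_neq0.
set u := word_inv w.
have uc0 : word_val Xp Xm u * c = 0.
  apply: I_deg0; first exact: I_mull.
  have -> : deg0 n = word_deg u + g.
    by rewrite word_deg_inv deg_w addNr; apply/ffunP=> j; rewrite !ffunE.
  exact: in_deg_word_valM.
have [r reg_r u'u] := word_inv_conj u (regular1 R).
have rc0 : iota r * c = 0.
  by rewrite -u'u rmorph1 mulr1 -mulrA uc0 mulr0.
have [phi_r_reg _] := phi_reg reg_r.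
by apply: phi_r_reg; rewrite -rmorphM rc0 rmorph0.
Qed.

End Words.

Theorem mainTheorem6 (k : fieldType) (n : nat) (R : algType k)
  (sh shi : 'I_n -> {lrmorphism R -> R}) (t : 'I_n -> R)
  (sh_shi : forall i, cancel (sh i) (shi i))
  (shi_sh : forall i, cancel (shi i) (sh i))
  (sh_comm : forall i j r, sh i (sh j r) = sh j (sh i r))
  (t_central : forall i r, t i * r = r * t i)
  (t_reg : forall i, regular (t i))
  (hcons : consistency sh shi t)
  (A : algType k) (iota : {lrmorphism R -> A}) (Xp Xm : 'I_n -> A)
  (hA : is_TGWC sh shi t iota Xp Xm)
  (B : algType k) (phi : {lrmorphism A -> B})
  (phi_reg : forall r : R, regular r -> regular (phi (iota r))) :
  forall a : A, TGWA_ideal iota Xp Xm a -> phi a = 0.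
Proof.
have [rel _] := hA.
move=> _ [s [s_adm ->]]; rewrite raddf_sum big1_seq // => b /andP[_ /s_adm].
move=> [I [I_adm Ib]]; have [[_ I_graded] _] := I_adm.
have [s' [s'_hom ->]] := I_graded b Ib.
rewrite raddf_sum big1_seq // => p /andP[_ /s'_hom[Ip p_hom]].
exact (phi_homogeneous_admissible_eq0 sh_shi shi_sh t_reg rel phi_reg
         I_adm Ip p_hom).
Qed.
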